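(* Let $c,d\in\mathbb{N}$, $I=\mathbb{N}^d\times[c]$, and let $L\subseteq\mathbb{Z}^{(I)}$ be a $\mathrm{Sym}$-invariant lattice. Identify $\mathbb{Z}^{(\mathbb{N}^d\times[2c])}$ with $\mathbb{Z}^{(I)}\oplus\mathbb{Z}^{(I)}$ (basis vectors $\mathbf{e}_{\mathbf{i},j}$ with $j\le c$ spanning the first summand and $\mathbf{e}_{\mathbf{i},c+j}$ corresponding to $\mathbf{e}_{\mathbf{i},j}$ in the second summand), let $\varphi:\mathbb{Z}^{(\mathbb{N}^d\times[2c])}\to\mathbb{Z}^{(I)}$, $(\mathbf{u},\mathbf{v})\mapsto\mathbf{u}-\mathbf{v}$, and $M=\varphi^{-1}(L)\cap\mathbb{Z}_{\ge0}^{(\mathbb{N}^d\times[2c])}$. Then $M$ has a finite equivariant Hilbert basis if and only if $L$ has a finite equivariant Graver basis.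
   Context: $\mathbb{N}=\{1,2,\dots\}$. $\mathbb{Z}^{(J)}$ is the free abelian group with basis $J$, $\mathbb{Z}_{\ge0}^{(J)}$ its nonnegative vectors; lattice = subgroup. $\mathrm{Sym}$ is the group of permutations of $\mathbb{N}$ fixing all but finitely many points; it acts on $\mathbb{Z}^{(\mathbb{N}^d\times[k])}$ (any $k$) by linear extension of $\sigma(\mathbf{e}_{(i_1,\dots,i_d),j})=\mathbf{e}_{(\sigma(i_1),\dots,\sigma(i_d)),j}$. $\mathbf{u}\sqsubseteq\mathbf{v}$ iff $u_iv_i\ge0$ and $|u_i|\le|v_i|$ for all $i$; the Graver basis of $L$ is the set of $\sqsubseteq$-minimal elements of $L\setminus\{\mathbf{0}\}$; $\mathcal{G}$ is an equivariant Graver basis if $\mathrm{Sym}(\mathcal{G})=\{\sigma(\mathbf{g})\}$ is the Graver basis. A Hilbert basis of a monoid is a minimal generating set w.r.t. $\mathbb{Z}_{\ge0}$-combinations; $\mathcal{H}$ is an equivariant Hilbert basis of a $\mathrm{Sym}$-invariant monoid $M$ if $\mathrm{Sym}(\mathcal{H})$ is a Hilbert basis of $M$. *)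

From mathcomp Require Import all_boot all_order all_algebra.
Set Implicit Arguments. Unset Strict Implicit. Unset Printing Implicit Defensive.
Import Order.TTheory GRing.Theory Num.Theory.
Local Open Scope ring_scope.

(* Index set N^d x [k]; N is represented by nat (relabelled n |-> n-1),
   [k] by 'I_k (relabelled j |-> j-1). *)
Definition Idx (d k : nat) : Type := (d.-tuple nat * 'I_k)%type.

(* Vectors of Z^(J): integer-valued functions with finite support. *)
Definition vec (d k : nat) : Type := Idx d k -> int.

Definition finsupp (d k : nat) (v : vec d k) : Prop :=
  exists s : seq (Idx d k), forall x, v x != 0 -> x \in s.

Definition is_lattice (d k : nat) (L : vec d k -> Prop) : Prop :=
  (forall v, L v -> finsupp v) /\
  L (fun _ => 0) /\
  (forall u v, L u -> L v -> L (fun x => u x - v x)).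

Definition is_fperm (sigma tau : nat -> nat) : Prop :=
  cancel sigma tau /\ cancel tau sigma /\
  exists N : nat, forall n, (N <= n)%N -> sigma n = n.

(* Action of sigma (given via its inverse tau) on vectors:
   sigma(e_{(i1..id),j}) = e_{(sigma i1,..,sigma id),j}. *)
Definition act (d k : nat) (tau : nat -> nat) (v : vec d k) : vec d k :=
  fun x => v (map_tuple tau x.1, x.2).

Definition sym_invariant (d k : nat) (S : vec d k -> Prop) : Prop :=
  forall sigma tau, is_fperm sigma tau -> forall v, S v -> S (act tau v).

Definition sym_orbit (d k : nat) (G : vec d k -> Prop) (v : vec d k) : Prop :=
  exists sigma tau g, [/\ is_fperm sigma tau, G g & v = act tau g].

Definition conf_le (d k : nat) (u v : vec d k) : Prop :=
  forall x, 0 <= u x * v x /\ `|u x| <= `|v x|.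

Definition graver_basis (d k : nat) (L : vec d k -> Prop) (g : vec d k) : Prop :=
  [/\ L g, g <> (fun _ => 0) &
      forall u, L u -> u <> (fun _ => 0) -> conf_le u g -> u = g].

Definition has_finite_equivariant_graver_basis (d k : nat) (L : vec d k -> Prop)
  : Prop :=
  exists (n : nat) (G : 'I_n -> vec d k),
    forall v, graver_basis L v <-> sym_orbit (fun g => exists i, g = G i) v.

Definition nonneg_comb (d k : nat) (S : vec d k -> Prop) (v : vec d k) : Prop :=
  exists (n : nat) (h : 'I_n -> vec d k) (a : 'I_n -> nat),
    (forall i, S (h i)) /\ v = (fun x => \sum_(i < n) (a i)%:Z * h i x).

Definition generates (d k : nat) (S M : vec d k -> Prop) : Prop :=
  forall v, M v -> nonneg_comb S v.

Definition hilbert_basis (d k : nat) (H M : vec d k -> Prop) : Prop :=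
  [/\ (forall h, H h -> M h), generates H M &
      forall H' : vec d k -> Prop, (forall h, H' h -> H h) ->
        generates H' M -> forall h, H h -> H' h].

Definition has_finite_equivariant_hilbert_basis (d k : nat) (M : vec d k -> Prop)
  : Prop :=
  exists (n : nat) (H : 'I_n -> vec d k),
    hilbert_basis (sym_orbit (fun h => exists i, h = H i)) M.

Definition phi (d c : nat) (w : vec d (c + c)) : vec d c :=
  fun x => w (x.1, lshift c x.2) - w (x.1, rshift c x.2).

Definition monoidM (d c : nat) (L : vec d c -> Prop) (w : vec d (c + c)) : Prop :=
  [/\ finsupp w, (forall x, 0 <= w x) & L (phi w)].

(* The monoid M is positive and closed under differences of conformally
   comparable elements, so its Hilbert basis is forced: it consists of the
   conformally minimal nonzero elements of M, i.e. of the "Graver basis" of M.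
   These are exactly the lifts (g+, g-) of the Graver elements g of L and the
   vectors (e_z, e_z) with e_z not in L.  Both kinds transform equivariantly,
   and the unit vectors e_z fall into finitely many Sym-orbits, so finitely
   many orbit representatives of one basis yield finitely many for the other. *)

From mathcomp Require Import all_boot all_order all_algebra zify.
From Stdlib Require Import Classical ClassicalEpsilon FunctionalExtensionality PropExtensionality.
Set Implicit Arguments. Unset Strict Implicit. Unset Printing Implicit Defensive.
Import Order.TTheory GRing.Theory Num.Theory.
Local Open Scope ring_scope.

Lemma exists_neq (A B : Type) (f g : A -> B) : f <> g -> exists x, f x <> g x.
Proof.
move=> fg; apply: NNPP => nex; apply: fg; apply: functional_extensionality => x.
by apply: NNPP => fgx; apply: nex; exists x.
Qed.

Definition swapn (x y n : nat) : nat := if n == x then y else if n == y then x else n.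

Lemma swapnK x y : involutive (swapn x y).
Proof. by move=> n; rewrite /swapn; do ! case: eqP; lia. Qed.

Lemma swapn_id x y n : n <> x -> n <> y -> swapn x y n = n.
Proof. by rewrite /swapn => /eqP/negbTE -> /eqP/negbTE ->. Qed.

Lemma fperm_id : is_fperm id id.
Proof. by do !split; exists 0%N. Qed.

Lemma fperm_sym s t : is_fperm s t -> is_fperm t s.
Proof.
case=> st [ts [N sN]]; do !split => //.
by exists N => n /sN sn; rewrite -{1}sn st.
Qed.

Lemma fperm_comp s1 t1 s2 t2 :
  is_fperm s1 t1 -> is_fperm s2 t2 -> is_fperm (s1 \o s2) (t2 \o t1).
Proof.
case=> st1 [ts1 [N1 sN1]] [st2 [ts2 [N2 sN2]]]; do !split.
- exact: can_comp.
- exact: can_comp.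
- by exists (maxn N1 N2) => n nN /=; rewrite sN2 ?sN1 //; lia.
Qed.

Lemma fperm_swapn x y : is_fperm (swapn x y) (swapn x y).
Proof.
do !split; try exact: swapnK.
by exists (maxn x y).+1 => n ?; rewrite swapn_id //; lia.
Qed.

Lemma seq_orbit_rep (s : seq nat) : exists s' t', is_fperm s' t' /\
  exists2 q, all (fun i => i < size s)%N q & s = map s' q.
Proof.
elim: s => [|a s [sg [tu [fp [q qs sE]]]]].
  by exists id, id; split; [exact: fperm_id | exists [::]].
have q_lt : all (fun i => i < (size s).+1)%N q by apply: sub_all qs => i /=; lia.
case: (fp) => st [ts _].
case: (boolP (a \in map sg q)) => [/mapP [i iq ->] | /mapP a_notin].
  exists sg, tu; split => //; exists (i :: q); last by rewrite sE.
  by rewrite /= q_lt andbT; have := allP qs i iq; lia.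
exists (sg \o swapn (size s) (tu a)), (swapn (size s) (tu a) \o tu).
split; first exact: fperm_comp fp (fperm_swapn _ _).
exists (size s :: q); first by rewrite /= ltnSn q_lt.
rewrite /=; congr cons; first by rewrite /swapn eqxx ts.
rewrite {1}sE; apply/eq_in_map => i iq /=; rewrite swapn_id //.
  by have := allP qs i iq; lia.
by move=> itu; apply: a_notin; exists i; rewrite // itu ts.
Qed.

Section Action.
Variables d k : nat.
Implicit Types (s t : nat -> nat) (v g : vec d k).

Lemma actK s t v : cancel s t -> act s (act t v) = v.
Proof.
move=> st; apply: functional_extensionality => -[x j].
by rewrite /act /=; congr (v (_, _)); apply: val_inj; rewrite /= mapK.
Qed.

Lemma act_id v : act id v = v.
Proof.
apply: functional_extensionality => -[x j].
by rewrite /act /=; congr (v (_, _)); apply: val_inj; rewrite /= map_id.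
Qed.

Lemma act_finsupp s t v : is_fperm s t -> finsupp v -> finsupp (act t v).
Proof.
move=> [_ [ts _]] [r vr]; exists [seq (map_tuple s y.1, y.2) | y <- r] => x vx.
apply/mapP; exists (map_tuple t x.1, x.2); first exact: vr.
by case: x {vx} => x j /=; congr pair; apply: val_inj; rewrite /= mapK.
Qed.

Lemma sym_orbit_id (F : vec d k -> Prop) v : F v -> sym_orbit F v.
Proof. by move=> Fv; exists id, id, v; rewrite act_id; split => //; exact: fperm_id. Qed.

Lemma sym_orbit_sub (F P : vec d k -> Prop) v : sym_invariant P ->
  (forall g, F g -> P g) -> sym_orbit F v -> P v.
Proof. by move=> iP FP [s [t [g [fp /FP Pg ->]]]]; exact: iP _ _ fp _ Pg. Qed.

End Action.

Definition finite_set (T : Type) (F : T -> Prop) : Prop :=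
  exists n (f : 'I_n -> T), forall x, F x <-> exists i, x = f i.

Section FiniteSets.
Variables T U : Type.

Lemma finite_set_exists (Q : (T -> Prop) -> Prop) :
  (exists n (f : 'I_n -> T), Q (fun x => exists i, x = f i)) <->
  exists2 F, finite_set F & Q F.
Proof.
split=> [[n [f Qf]] | [F [n [f Ff]] QF]].
  by exists (fun x => exists i, x = f i) => //; exists n, f.
exists n, f; suff <- : F = (fun x => exists i, x = f i) by [].
by apply: functional_extensionality => x; apply: propositional_extensionality.
Qed.

Lemma finite_set_ext (F G : T -> Prop) :
  (forall x, F x <-> G x) -> finite_set F -> finite_set G.
Proof. by move=> FG [n [f Ff]]; exists n, f => x; rewrite -FG. Qed.

Lemma finite_set_image (F : T -> Prop) (f : T -> U) :
  finite_set F -> finite_set (fun y => exists2 x, F x & y = f x).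
Proof.
move=> [n [e Fe]]; exists n, (f \o e) => y; split.
- by move=> [x /Fe [i ->] ->]; exists i.
- by move=> [i ->]; exists (e i) => //; apply/Fe; exists i.
Qed.

Lemma finite_setU (F G : T -> Prop) :
  finite_set F -> finite_set G -> finite_set (fun x => F x \/ G x).
Proof.
move=> [m [e Fe]] [n [f Gf]].
exists (m + n), (fun i => match split i with inl i => e i | inr i => f i end) => x.
split=> [[/Fe [i ->] | /Gf [i ->]] | [i ->]].
- by exists (lshift n i); rewrite (unsplitK (inl _ i)).
- by exists (rshift m i); rewrite (unsplitK (inr _ i)).
- case: (split i) => j; [left; apply/Fe | right; apply/Gf]; by exists j.
Qed.

End FiniteSets.

Lemma finite_set_finType (I : finType) (P : I -> Prop) : finite_set P.
Proof.
pose r := [seq i <- enum I | excluded_middle_informative (P i)].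
exists (size r), (tnth (in_tuple r)) => i; split.
- move=> Pi; have : i \in in_tuple r by rewrite mem_filter mem_enum andbT; apply/sumboolP.
  by move=> /tnthP [j ->]; exists j.
- by move=> [j ->]; have := mem_tnth j (in_tuple r); rewrite mem_filter => /andP [/sumboolP].
Qed.

Lemma finite_setI T (F P : T -> Prop) : finite_set F -> finite_set (fun x => F x /\ P x).
Proof.
move=> [n [f Ff]].
apply: finite_set_ext (finite_set_image f (finite_set_finType (fun i => P (f i)))) => x.
split=> [[i Pfi ->] | [/Ff [i ->] Pfi]]; last by exists i.
by split => //; apply/Ff; exists i.
Qed.

Section ConformalOrder.
Variables d k : nat.
Implicit Types (S : vec d k -> Prop) (u v g : vec d k).

Lemma conf_leP u g : conf_le u g <-> forall x, (0 <= u x <= g x) || (g x <= u x <= 0).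
Proof.
split=> ug x; have := ug x; last by case/orP => /andP [] ? ?; split; nia.
by case=> ug0 ug1; apply/orP; case: (lerP 0 (g x)) => g0; [left | right]; apply/andP; nia.
Qed.

Lemma conf_le_refl g : conf_le g g.
Proof. by apply/conf_leP => x; case: (lerP 0 (g x)); lia. Qed.

Lemma conf_le_trans u v g : conf_le u v -> conf_le v g -> conf_le u g.
Proof. by move=> /conf_leP uv /conf_leP vg; apply/conf_leP => x; move: (uv x) (vg x); lia. Qed.

Lemma finsupp_subsupp u g : (forall x, g x = 0 -> u x = 0) -> finsupp g -> finsupp u.
Proof.
move=> gu [r gr]; exists r => x ux; apply: gr; apply: contra ux => /eqP gx.
by rewrite gu.
Qed.

Lemma conf_le_ind (P : vec d k -> Prop) :
  (forall g, (forall u, conf_le u g -> u <> g -> P u) -> P g) -> forall g, finsupp g -> P g.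
Proof.
move=> IH g [r gr].
suff: forall n u, (\sum_(x <- r) `|u x| < n)%N -> conf_le u g -> P u.
  by move/(_ _ g (ltnSn _) (conf_le_refl g)).
elim=> // n IHn u un ug; apply: IH => v vu vneu; apply: IHn (conf_le_trans vu ug).
move/conf_leP: ug => ug; move/conf_leP: vu => vu.
have [x vux] := exists_neq vneu.
have xr : x \in r by apply: gr; apply/eqP => gx; move: (ug x) (vu x) vux; lia.
rewrite -ltnS; apply: leq_trans un; rewrite ltnS (big_rem x xr) [X in (_ < X)%N](big_rem x xr).
rewrite -addSn leq_add //; first by move: (vu x) vux; lia.
by apply: leq_sum => y _; move: (vu y); lia.
Qed.

Lemma graver_basis_below S g : S g -> finsupp g -> g <> (fun _ => 0) ->
  exists2 h, graver_basis S h & conf_le h g.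
Proof.
move=> Sg gf; elim/conf_le_ind: g / gf Sg => g IH Sg g0.
case: (classic (graver_basis S g)) => [Gg | notGg]; first by exists g => //; exact: conf_le_refl.
have [u [Su u0 ug ugne]] : exists u, [/\ S u, u <> (fun _ => 0), conf_le u g & u <> g].
  apply: NNPP => none; apply: notGg; split => // u Su u0 ug.
  by apply: NNPP => ugne; apply: none; exists u.
have [h Gh hu] := IH u ug ugne Su u0.
by exists h => //; exact: conf_le_trans hu ug.
Qed.

Lemma graver_basis_sym_invariant S : sym_invariant S -> sym_invariant (graver_basis S).
Proof.
move=> iS s t fp g [Sg g0 gmin]; have fp' := fperm_sym fp; case: (fp) => st [ts _].
split; first exact: iS _ _ fp _ Sg.
  by move=> tg0; apply: g0; rewrite -(actK g st) tg0.
move=> u Su u0 ug; rewrite -(actK u ts); congr act; apply: gmin.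
- exact: iS _ _ fp' _ Su.
- by move=> su0; apply: u0; rewrite -(actK u ts) su0.
- by rewrite -(actK g st) => x; exact: ug.
Qed.

End ConformalOrder.

Section NonnegComb.
Variables (d k : nat) (S : vec d k -> Prop).

Lemma nonneg_comb0 : nonneg_comb S (fun _ => 0).
Proof.
exists 0%N, (fun _ => fun _ => 0), (fun _ => 0%N); split; first by case.
by apply: functional_extensionality => x; rewrite big_ord0.
Qed.

Lemma nonneg_combD v h : nonneg_comb S v -> S h -> nonneg_comb S (fun x => v x + h x).
Proof.
move=> [n [e [a [Se ->]]]] Sh.
exists n.+1, (fun i => if unlift ord0 i is Some j then e j else h),
  (fun i => if unlift ord0 i is Some j then a j else 1%N); split.
  by move=> i; case: (unlift ord0 i).
apply: functional_extensionality => x; rewrite big_ord_recl /= unlift_none addrC mul1r.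
by congr (_ + _); apply: eq_bigr => i _; rewrite liftK.
Qed.

End NonnegComb.

Section PositiveMonoid.
Variables (d k : nat) (M : vec d k -> Prop).
Hypothesis M_ge0 : forall w, M w -> forall x, 0 <= w x.
Hypothesis M_finsupp : forall w, M w -> finsupp w.
Hypothesis M_sub : forall u w, M u -> M w -> conf_le u w -> M (fun x => w x - u x).

Lemma generates_of_graver_basis S : (forall h, graver_basis M h -> S h) -> generates S M.
Proof.
move=> GS w Mw; have wf := M_finsupp Mw; elim/conf_le_ind: w / wf Mw => w IH Mw.
case: (classic (w = fun _ => 0)) => [-> | w0]; first exact: nonneg_comb0.
have [h Gh hw] := graver_basis_below Mw (M_finsupp Mw) w0.
have [Mh h0 _] := Gh.
have -> : w = (fun x => (w x - h x) + h x).
  by apply: functional_extensionality => x; rewrite subrK.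
apply: nonneg_combD (GS _ Gh); apply: IH; last exact: M_sub.
- by move/conf_leP: hw => hw; apply/conf_leP => x; move: (hw x) (M_ge0 Mh x); lia.
- have [x hx] := exists_neq h0.
  by move=> /(congr1 (fun f => f x)) /=; lia.
Qed.

Lemma graver_basis_sub_generator S : (forall h, S h -> M h) -> generates S M ->
  forall w, graver_basis M w -> S w.
Proof.
move=> SM Sgen w [Mw w0 wmin].
have [n [h [a [Sh wE]]]] := Sgen w Mw.
have [x wx] := exists_neq w0.
have [i ahi] : exists i, (a i)%:Z * h i x <> 0.
  apply: NNPP => none; apply: wx; rewrite wE big1 // => i _.
  by apply: NNPP => ahi; apply: none; exists i.
have ai : (0 < a i)%N by move: ahi; case: (a i) => //; rewrite mul0r.
suff <- : h i = w by [].
apply: wmin; [exact: SM | by move=> hi0; apply: ahi; rewrite hi0 mulr0 |].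
apply/conf_leP => y; have hi_ge0 := M_ge0 (SM _ (Sh i)) y.
rewrite wE (bigD1 i) //= hi_ge0 /=; apply/orP; left.
apply: (@le_trans _ _ ((a i)%:Z * h i y)); first by apply: ler_peMl; rewrite ?lez_nat.
rewrite lerDl; apply: sumr_ge0 => j _; apply: mulr_ge0 => //; exact: M_ge0 (SM _ (Sh j)) _.
Qed.

Lemma hilbert_basisE S : hilbert_basis S M <-> forall w, S w <-> graver_basis M w.
Proof.
split=> [[SM Sgen Smin] w | SG].
  split; last exact: graver_basis_sub_generator.
  apply: (Smin (graver_basis M)); first exact: graver_basis_sub_generator.
  exact: generates_of_graver_basis.
have SM h : S h -> M h by move/SG => [].
split=> //; first by apply: generates_of_graver_basis => h /SG.
move=> H' H'S H'gen h /SG; apply: graver_basis_sub_generator => // u /H'S; exact: SM.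
Qed.

End PositiveMonoid.

Section Lifting.
Variables d c : nat.
Implicit Types (u v g : vec d c) (w : vec d (c + c)) (z : Idx d c).

Definition vpair u v : vec d (c + c) := fun X =>
  match split X.2 with inl j => u (X.1, j) | inr j => v (X.1, j) end.

Lemma vpair_l u v x : vpair u v (x.1, lshift c x.2) = u x.
Proof. by rewrite /vpair /= (unsplitK (inl _ x.2)) -surjective_pairing. Qed.

Lemma vpair_r u v x : vpair u v (x.1, rshift c x.2) = v x.
Proof. by rewrite /vpair /= (unsplitK (inr _ x.2)) -surjective_pairing. Qed.

Lemma forall_Idx_add (P : Idx d (c + c) -> Prop) :
  (forall x, P (x.1, lshift c x.2) /\ P (x.1, rshift c x.2)) -> forall X, P X.
Proof. by move=> Plr [t i]; case: (split_ordP i) => j ->; have [] := Plr (t, j). Qed.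

Lemma phi_vpair u v : phi (vpair u v) = fun x => u x - v x.
Proof. by apply: functional_extensionality => x; rewrite /phi vpair_l vpair_r. Qed.

Lemma finsupp_vpair u v : finsupp u -> finsupp v -> finsupp (vpair u v).
Proof.
move=> [r ur] [s vs].
exists ([seq (x.1, lshift c x.2) | x <- r] ++ [seq (x.1, rshift c x.2) | x <- s]).
apply: forall_Idx_add => x; rewrite vpair_l vpair_r !mem_cat; split=> [/ur | /vs] xrs.
- by rewrite (map_f (fun y => (y.1, lshift c y.2)) xrs).
- by rewrite (map_f (fun y => (y.1, rshift c y.2)) xrs) orbT.
Qed.

Definition posneg g : vec d (c + c) :=
  vpair (fun x => Num.max (g x) 0) (fun x => Num.max (- g x) 0).

Definition evec z : vec d c := fun x => (x == z)%:Z.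

Definition evec2 z : vec d (c + c) := vpair (evec z) (evec z).

Definition act_idx (s : nat -> nat) z : Idx d c := (map_tuple s z.1, z.2).

Lemma phi_act t w : phi (act t w) = act t (phi w).
Proof. by []. Qed.

Lemma phi_posneg g : phi (posneg g) = g.
Proof. by rewrite phi_vpair; apply: functional_extensionality => x; lia. Qed.

Lemma act_evec s t z : is_fperm s t -> act t (evec z) = evec (act_idx s z).
Proof.
move=> [st [ts _]]; apply: functional_extensionality => -[x j].
rewrite /act /evec /act_idx /= !xpair_eqE; congr (_ && _)%:Z.
by apply/eqP/eqP => [<- | ->]; apply: val_inj; rewrite /= mapK.
Qed.

End Lifting.

Section IndexOrbits.
Variables d c : nat.

Definition idx_of (y : d.-tuple 'I_d.+1 * 'I_c) : Idx d c := (map_tuple val y.1, y.2).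

(* A tuple has at most [d] distinct entries; the bound [d.+1] merely avoids
   the empty type ['I_0]. *)
Lemma idx_orbit_rep (z : Idx d c) :
  exists s t y, is_fperm s t /\ z = act_idx s (idx_of y).
Proof.
case: z => x j; have [s [t [fp [q qx xE]]]] := seq_orbit_rep x.
have q_size : size (map (@inord d) q) == d by rewrite size_map -(size_map s) -xE size_tuple.
exists s, t, (Tuple q_size, j); split => //; congr pair; apply: val_inj.
rewrite /= xE -!map_comp; apply/eq_in_map => i iq /=.
by rewrite inordK //; move: (allP qx i iq); rewrite size_tuple; lia.
Qed.

End IndexOrbits.

Section Monoid.
Variables (d c : nat) (L : vec d c -> Prop).
Hypotheses (L_lattice : is_lattice L) (L_sym : sym_invariant L).
Local Notation M := (monoidM L).
Implicit Types (v g : vec d c) (w : vec d (c + c)) (z : Idx d c).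

Lemma monoidM_ge0 w : M w -> forall X, 0 <= w X.
Proof. by case. Qed.

Lemma monoidM_finsupp w : M w -> finsupp w.
Proof. by case. Qed.

Lemma monoidM_sub w w' : M w -> M w' -> conf_le w w' -> M (fun X => w' X - w X).
Proof.
move=> [_ _ Lw] [wf' w'_ge0 Lw'] /conf_leP ww'; split.
- by apply: finsupp_subsupp wf' => X w'X; move: (ww' X); lia.
- by move=> X; move: (ww' X) (w'_ge0 X); lia.
- have := L_lattice.2.2 _ _ Lw' Lw; congr L.
  by apply: functional_extensionality => x; rewrite /phi /=; lia.
Qed.

Lemma monoidM_sym_invariant : sym_invariant M.
Proof.
move=> s t fp w [wf w_ge0 Lw]; split; [exact: act_finsupp fp wf | by move=> X; exact: w_ge0 |].
exact: L_sym _ _ fp _ Lw.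
Qed.

Lemma monoidM_posneg g : L g -> M (posneg g).
Proof.
move=> Lg; split; last by rewrite phi_posneg.
- by apply: finsupp_vpair; apply: finsupp_subsupp (L_lattice.1 _ Lg) => x ->; lia.
- by apply: forall_Idx_add => x; rewrite /posneg vpair_l vpair_r; lia.
Qed.

Lemma monoidM_evec2 z : M (evec2 z).
Proof.
have evec_finsupp : finsupp (evec z) by exists [:: z] => x; rewrite /evec inE; case: (x == z).
split; first exact: finsupp_vpair.
- by apply: forall_Idx_add => x; rewrite /evec2 vpair_l vpair_r.
- rewrite phi_vpair; have -> : (fun x => evec z x - evec z x) = fun _ => 0.
    by apply: functional_extensionality => x; rewrite subrr.
  exact: L_lattice.2.1.
Qed.

Lemma posneg0 : posneg (fun _ : Idx d c => 0) = fun _ => 0.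
Proof.
apply: functional_extensionality; apply: forall_Idx_add => x.
by rewrite /posneg vpair_l vpair_r.
Qed.

Lemma posneg_eq0 g : posneg g = (fun _ => 0) -> g = (fun _ => 0).
Proof.
move=> /(congr1 (@phi d c)); rewrite phi_posneg => ->.
by apply: functional_extensionality => x; rewrite /phi subrr.
Qed.

Lemma evec2_neq0 z : evec2 z <> (fun _ => 0).
Proof. by move=> /(congr1 (fun w => w (z.1, lshift c z.2))); rewrite /evec2 vpair_l /evec eqxx. Qed.

Lemma conf_le_posneg w g : (forall X, 0 <= w X) -> conf_le w (posneg g) ->
  w = posneg (phi w) /\ conf_le (phi w) g.
Proof.
move=> w_ge0 /conf_leP wg.
have wlr x : (0 <= w (x.1, lshift c x.2) <= Num.max (g x) 0) &&
             (0 <= w (x.1, rshift c x.2) <= Num.max (- g x) 0).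
  move: (wg (x.1, lshift c x.2)) (wg (x.1, rshift c x.2)).
  by rewrite /posneg !vpair_l !vpair_r; lia.
split; last by apply/conf_leP => x; move: (wlr x); rewrite /phi; lia.
apply: functional_extensionality; apply: forall_Idx_add => x.
by rewrite /posneg vpair_l vpair_r /phi; move: (wlr x); lia.
Qed.

Lemma posneg_conf_le g w : (forall X, 0 <= w X) -> conf_le g (phi w) -> conf_le (posneg g) w.
Proof.
move=> w_ge0 /conf_leP gw; apply/conf_leP; apply: forall_Idx_add => x.
move: (gw x) (w_ge0 (x.1, lshift c x.2)) (w_ge0 (x.1, rshift c x.2)).
by rewrite /posneg vpair_l vpair_r /phi; lia.
Qed.

Lemma lattice_opp v : L v -> L (fun x => - v x).
Proof.
move=> Lv; have := L_lattice.2.2 _ _ L_lattice.2.1 Lv; congr L.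
by apply: functional_extensionality => x; rewrite sub0r.
Qed.

Lemma graver_basis_posneg g : graver_basis L g -> graver_basis M (posneg g).
Proof.
move=> [Lg g0 gmin]; split; [exact: monoidM_posneg | by move/posneg_eq0 |].
move=> w Mw w0 wg; have [wE phiw_g] := conf_le_posneg (monoidM_ge0 Mw) wg.
rewrite wE; congr posneg; apply: gmin phiw_g; first by case: Mw.
by move=> phiw0; apply: w0; rewrite wE phiw0 posneg0.
Qed.

Lemma graver_basis_evec2 z : ~ L (evec z) -> graver_basis M (evec2 z).
Proof.
move=> Lz; split; [exact: monoidM_evec2 | exact: evec2_neq0 |].
move=> w Mw w0 /conf_leP wz.
have [a [b [ab01 wE]]] : exists a b : int, (0 <= a <= 1) && (0 <= b <= 1) /\
    w = vpair (fun x => a * evec z x) (fun x => b * evec z x).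
  exists (w (z.1, lshift c z.2)), (w (z.1, rshift c z.2)); split.
    move: (wz (z.1, lshift c z.2)) (wz (z.1, rshift c z.2)).
    by rewrite /evec2 vpair_l vpair_r /evec eqxx; lia.
  apply: functional_extensionality; apply: forall_Idx_add => x.
  move: (wz (x.1, lshift c x.2)) (wz (x.1, rshift c x.2)).
  rewrite /evec2 !vpair_l !vpair_r /evec; case: eqP => [-> | _] /=; lia.
have Lphi : L (fun x => a * evec z x - b * evec z x) by rewrite -phi_vpair -wE; case: Mw.
have ab : a = b.
  apply: NNPP => ab; apply: Lz.
  have [<- | <-] : (fun x => a * evec z x - b * evec z x) = evec z \/
                  (fun x => - (a * evec z x - b * evec z x)) = evec z.
  - by case: (lerP a b) => ba; [right | left]; apply: functional_extensionality => x;
      rewrite /evec; case: (x == z) => /=; lia.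
  - exact: Lphi.
  - exact: lattice_opp.
have [a0 | a1] : a = 0 \/ a = 1 by lia.
- by exfalso; apply: w0; rewrite wE -ab a0; apply: functional_extensionality;
    apply: forall_Idx_add => x; rewrite vpair_l vpair_r mul0r.
- by rewrite wE -ab a1 /evec2; congr vpair; apply: functional_extensionality => x; rewrite mul1r.
Qed.

Lemma graver_basis_monoidM_phi0 w : graver_basis M w -> phi w = (fun _ => 0) ->
  exists2 z, ~ L (evec z) & w = evec2 z.
Proof.
move=> [Mw w0 wmin] phi0; have w_ge0 := monoidM_ge0 Mw.
have wlr x : w (x.1, lshift c x.2) = w (x.1, rshift c x.2).
  by have := congr1 (fun v => v x) phi0; rewrite /phi /=; lia.
have [z wz] : exists z, w (z.1, lshift c z.2) <> 0.
  apply: NNPP => none; apply: w0; apply: functional_extensionality.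
  apply: forall_Idx_add => x; rewrite -wlr.
  by have wx : w (x.1, lshift c x.2) = 0 by apply: NNPP => wx; apply: none; exists x.
have zw : conf_le (evec2 z) w.
  apply/conf_leP; apply: forall_Idx_add => x; rewrite /evec2 vpair_l vpair_r /evec.
  move: (w_ge0 (x.1, lshift c x.2)) (w_ge0 (x.1, rshift c x.2)) (wlr x).
  by case: eqP => [-> | _] /=; lia.
have wE := wmin _ (monoidM_evec2 z) (@evec2_neq0 z) zw.
exists z => // Lz.
have posneg_le : conf_le (posneg (evec z)) w.
  apply: conf_le_trans zw; apply/conf_leP; apply: forall_Idx_add => x.
  by rewrite /posneg /evec2 !vpair_l !vpair_r /evec; case: (x == z) => /=; lia.
have posneg_neq0 : posneg (evec z) <> (fun _ => 0).
  by move/posneg_eq0/(congr1 (fun v => v z)); rewrite /evec eqxx.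
move: (wmin _ (monoidM_posneg Lz) posneg_neq0 posneg_le); rewrite -wE.
move/(congr1 (fun v : vec d (c + c) => v (z.1, rshift c z.2))).
by rewrite /posneg /evec2 !vpair_r /evec eqxx.
Qed.

Lemma graver_basis_monoidM w : graver_basis M w <->
  (exists2 g, graver_basis L g & w = posneg g) \/ (exists2 z, ~ L (evec z) & w = evec2 z).
Proof.
split=> [Gw | [[g Gg ->] | [z Lz ->]]]; [| exact: graver_basis_posneg | exact: graver_basis_evec2].
case: (classic (phi w = fun _ => 0)) => [phi0 | phi_neq0].
  by right; exact: graver_basis_monoidM_phi0.
have [[_ w_ge0 Lphi] _ wmin] := Gw.
have [g Gg g_phiw] := graver_basis_below Lphi (L_lattice.1 _ Lphi) phi_neq0.
have [Lg g0 _] := Gg.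
left; exists g => //; apply/esym/wmin; [exact: monoidM_posneg | by move/posneg_eq0 |].
exact: posneg_conf_le g_phiw.
Qed.

Let hilbert_basis_monoidME := hilbert_basisE monoidM_ge0 monoidM_finsupp monoidM_sub.

Lemma graver_of_hilbert F : finite_set F -> hilbert_basis (sym_orbit F) M ->
  exists2 G, finite_set G & forall g, graver_basis L g <-> sym_orbit G g.
Proof.
move=> F_fin /hilbert_basis_monoidME FG.
exists (fun g => (exists2 h, F h & g = phi h) /\ graver_basis L g).
  exact/finite_setI/finite_set_image.
move=> g; split=> [Gg | ]; last first.
  apply: sym_orbit_sub => [|? [] //]; exact: graver_basis_sym_invariant.
have [s [t [h [fp Fh E]]]] : sym_orbit F (posneg g) by apply/FG; exact: graver_basis_posneg.
have [st [ts _]] := fp.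
have phi_h : phi h = act s g by rewrite -[h](actK h st) -E phi_act phi_posneg.
exists s, t, (phi h); split=> //; last by rewrite phi_h actK.
split; first by exists h.
by rewrite phi_h; exact: graver_basis_sym_invariant L_sym _ _ (fperm_sym fp) _ Gg.
Qed.

Lemma hilbert_of_graver G : finite_set G -> (forall g, graver_basis L g <-> sym_orbit G g) ->
  exists2 F, finite_set F & hilbert_basis (sym_orbit F) M.
Proof.
move=> G_fin GG.
exists (fun w => (exists2 g, G g & w = posneg g) \/
                 (exists2 y, ~ L (evec (idx_of y)) & w = evec2 (idx_of y))).
  by apply: finite_setU; apply: finite_set_image => //; exact: finite_set_finType.
apply/hilbert_basis_monoidME => w; split.
  apply: sym_orbit_sub; first exact: graver_basis_sym_invariant monoidM_sym_invariant.
  move=> h Fh; apply/graver_basis_monoidM; case: Fh => [[g Gg ->] | [y Ly ->]].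
    by left; exists g => //; apply/GG; exact: sym_orbit_id.
  by right; exists (idx_of y).
case/graver_basis_monoidM => [[g /GG [s [t [g' [fp Gg' ->]]]] ->] | [z Lz ->]].
  by exists s, t, (posneg g'); split => //; left; exists g'.
have [s [t [y [fp zE]]]] := idx_orbit_rep z.
exists s, t, (evec2 (idx_of y)); split=> //.
  by right; exists y => // Ly; apply: Lz; rewrite zE -(act_evec _ fp); exact: L_sym _ _ fp _ Ly.
by rewrite zE /evec2 -(act_evec _ fp).
Qed.

End Monoid.

Theorem corollary4p12 (c d : nat) (L : vec d c -> Prop) :
  (0 < c)%N -> (0 < d)%N ->
  is_lattice L -> sym_invariant L ->
  has_finite_equivariant_hilbert_basis (monoidM L) <->
  has_finite_equivariant_graver_basis L.
Proof.
move=> _ _ L_lattice L_sym.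
have hilbertE := finite_set_exists (fun F => hilbert_basis (sym_orbit F) (monoidM L)).
have graverE := finite_set_exists (fun G => forall g, graver_basis L g <-> sym_orbit G g).
split=> [/hilbertE [F F_fin FM] | /graverE [G G_fin GL]].
- by apply/graverE; exact: graver_of_hilbert F_fin FM.
- by apply/hilbertE; exact: hilbert_of_graver G_fin GL.
Qed.
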